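(* Let $\|\cdot\|_F$ and $\|\cdot\|_G$ be $F$-norms on $\mathbb{R}^{d+1}$. Then $\|\cdot\|_F=\|\cdot\|_G$ if and only if $\{\mathbf{x}\in[0,\infty)^{d+1}:\|\mathbf{x}\|_F=1\}=\{\mathbf{x}\in[0,\infty)^{d+1}:\|\mathbf{x}\|_G=1\}$; that is, each $F$-norm is characterized by the part of its unit sphere contained in the positive orthant.
   Context: An $F$-norm on $\mathbb{R}^{d+1}$ is a norm of the form $\|\mathbf{x}\|_F=E(\max(|x_0|,|x_1|X_1,\dots,|x_d|X_d))$, where $\mathbf{X}=(X_1,\dots,X_d)$ has distribution function $F$ and each $X_i$ is a.s. nonnegative with $0<E(X_i)<\infty$. *)

From HB Require Import structures.
From mathcomp Require Import all_boot all_order all_algebra.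
From mathcomp Require Import all_classical all_reals all_analysis.
Set Implicit Arguments. Unset Strict Implicit. Unset Printing Implicit Defensive.
Import Order.TTheory GRing.Theory Num.Theory.
Local Open Scope classical_set_scope.
Local Open Scope ring_scope.

(* A random vector X = (X_1,...,X_d) on a probability space (T, P), whose
   distribution is F, is admissible for an F-norm: each X_i is measurable,
   a.s. nonnegative, integrable, with 0 < E(X_i) (< oo by integrability). *)
Definition Fnorm_generator {R : realType} {dT : measure_display}
  {T : measurableType dT} (P : probability T R) (d : nat)
  (X : 'I_d -> T -> R) : Prop :=
  forall i : 'I_d,
    [/\ measurable_fun setT (X i),
        {ae P, forall t, 0 <= X i t},
        P.-integrable setT (EFin \o X i) &
        (0 < \int[P]_t (X i t)%:E)%E].

(* The integrand max(|x_0|, |x_1| X_1, ..., |x_d| X_d), for x in R^(d+1)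
   represented as a row vector with coordinates x_0 = x 0 0 and
   x_(i+1) = x 0 (lift ord0 i). *)
Definition Fnorm_integrand {R : realType} {T : Type} (d : nat)
  (X : 'I_d -> T -> R) (x : 'rV[R]_d.+1) (t : T) : R :=
  \big[Num.max/`|x ord0 ord0|]_(i < d) (`|x ord0 (lift ord0 i)| * X i t).

(* ||x||_F = E(max(|x_0|, |x_1| X_1, ..., |x_d| X_d)) (finite under the
   hypotheses Fnorm_generator). *)
Definition Fnorm {R : realType} {dT : measure_display} {T : measurableType dT}
  (P : probability T R) (d : nat) (X : 'I_d -> T -> R) (x : 'rV[R]_d.+1) : R :=
  fine (\int[P]_t (Fnorm_integrand X x t)%:E).

Definition pos_unit_sphere {R : realType} (d : nat) (N : 'rV[R]_d.+1 -> R)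
  : set 'rV[R]_d.+1 :=
  [set x : 'rV[R]_d.+1 | (forall j, 0 <= x ord0 j) /\ N x = 1].

From HB Require Import structures.
From mathcomp Require Import all_boot all_order all_algebra.
From mathcomp Require Import all_classical all_reals all_analysis.
From mathcomp Require Import measurable_realfun.
Import Order.TTheory GRing.Theory Num.Theory.
Local Open Scope classical_set_scope.
Local Open Scope ring_scope.

(* An F-norm is nonnegative, positively homogeneous, and depends on x only
   through (|x_0|, ..., |x_d|), a point of the positive orthant.  Two such
   functions with the same unit level set in the orthant agree there: if
   N1 x > 0 then x / N1 x lies on that level set, so N2 (x / N1 x) = 1, i.e.
   N2 x = N1 x; symmetrically if N2 x > 0; otherwise both vanish. *)

Lemma fineMl_EFin (R : realDomainType) (c : R) (a : \bar R) :
  fine (c%:E * a)%E = c * fine a.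
Proof.
by case: a => [r | |] //=; rewrite mulr0 mulr_infty;
  case: sgrP; rewrite ?mul0e ?mul1e ?mulN1e.
Qed.

Section PositivelyHomogeneous.
Variables (R : realType) (d : nat).
Implicit Types (N : 'rV[R]_d.+1 -> R) (x : 'rV[R]_d.+1).

Definition pos_homogeneous N := forall c x, 0 <= c -> N (c *: x) = c * N x.

Definition in_pos_orthant x := forall j, 0 <= x ord0 j.

Lemma pos_unit_sphere_normalize N x :
  pos_homogeneous N -> in_pos_orthant x -> 0 < N x ->
  pos_unit_sphere N ((N x)^-1 *: x).
Proof.
move=> homN x_ge0 Nx_gt0; split.
  by move=> j; rewrite mxE mulr_ge0 // invr_ge0 ltW.
by rewrite homN ?invr_ge0 ?ltW // mulVf ?gt_eqF.
Qed.

Lemma eq_pos_homogeneous_of_sub_pos_unit_sphere N1 N2 x :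
  pos_homogeneous N1 -> pos_homogeneous N2 ->
  pos_unit_sphere N1 `<=` pos_unit_sphere N2 ->
  in_pos_orthant x -> 0 < N1 x -> N1 x = N2 x.
Proof.
move=> homN1 homN2 sub12 x_ge0 N1x_gt0.
have [_] := sub12 _ (pos_unit_sphere_normalize _ _ homN1 x_ge0 N1x_gt0).
by rewrite homN2 ?invr_ge0 ?ltW // mulrC => /divr1_eq.
Qed.

Lemma eq_on_pos_orthant_of_pos_unit_sphere N1 N2 x :
  pos_homogeneous N1 -> pos_homogeneous N2 ->
  (forall y, 0 <= N1 y) -> (forall y, 0 <= N2 y) ->
  pos_unit_sphere N1 = pos_unit_sphere N2 ->
  in_pos_orthant x -> N1 x = N2 x.
Proof.
move=> homN1 homN2 N1_ge0 N2_ge0 eqS x_ge0.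
have [N1x_gt0 | N1x_le0] := ltP 0 (N1 x).
  by apply: eq_pos_homogeneous_of_sub_pos_unit_sphere; rewrite ?eqS.
have [N2x_gt0 | N2x_le0] := ltP 0 (N2 x).
  by symmetry; apply: eq_pos_homogeneous_of_sub_pos_unit_sphere; rewrite ?eqS.
by apply: le_anti; rewrite (le_trans N1x_le0 (N2_ge0 x)) (le_trans N2x_le0).
Qed.

End PositivelyHomogeneous.

Arguments pos_homogeneous {R d} N.
Arguments in_pos_orthant {R d} x.

Section Fnorm.
Variables (R : realType) (d : nat).
Implicit Types (x : 'rV[R]_d.+1) (c : R).

Lemma Fnorm_integrand_ge0 (T : Type) (X : 'I_d -> T -> R) x t :
  0 <= Fnorm_integrand X x t.
Proof. exact: le_trans (normr_ge0 _) (bigmax_ge_id _ _ _ _). Qed.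

Lemma Fnorm_integrandZ (T : Type) (X : 'I_d -> T -> R) x c t : 0 <= c ->
  Fnorm_integrand X (c *: x) t = c * Fnorm_integrand X x t.
Proof.
move=> c_ge0; rewrite /Fnorm_integrand !mxE normrM (ger0_norm c_ge0).
rewrite (big_morph (fun a => c * a) (fun a b => maxr_pMr a b c_ge0) (erefl _)).
by apply: eq_bigr => i _; rewrite mxE normrM (ger0_norm c_ge0) mulrA.
Qed.

Lemma Fnorm_integrand_normr (T : Type) (X : 'I_d -> T -> R) x t :
  Fnorm_integrand X (map_mx Num.norm x) t = Fnorm_integrand X x t.
Proof.
rewrite /Fnorm_integrand mxE normr_id.
by apply: eq_bigr => i _; rewrite mxE normr_id.
Qed.

Variables (dT : measure_display) (T : measurableType dT) (P : probability T R).
Variable X : 'I_d -> T -> R.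

Lemma measurable_Fnorm_integrand x :
  (forall i, measurable_fun setT (X i)) ->
  measurable_fun setT (Fnorm_integrand X x).
Proof.
move=> mX; rewrite /Fnorm_integrand; elim: (index_enum _) => [|i r ih].
  by under eq_fun do rewrite big_nil; exact: measurable_cst.
under eq_fun do rewrite big_cons.
by apply: measurable_maxr ih; apply: measurable_funM => //; exact: measurable_cst.
Qed.

Lemma Fnorm_ge0 x : 0 <= Fnorm P X x.
Proof.
by apply/fine_ge0/integral_ge0 => t _; rewrite lee_fin Fnorm_integrand_ge0.
Qed.

Lemma Fnorm_normr x : Fnorm P X (map_mx Num.norm x) = Fnorm P X x.
Proof.
by congr fine; apply: eq_integral => t _; rewrite Fnorm_integrand_normr.
Qed.

Lemma Fnorm_pos_homogeneous :
  (forall i, measurable_fun setT (X i)) -> pos_homogeneous (Fnorm P X).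
Proof.
move=> mX c x c_ge0; rewrite /Fnorm -fineMl_EFin -ge0_integralZl_EFin //.
- by congr fine; apply: eq_integral => t _; rewrite Fnorm_integrandZ.
- by move=> t _; rewrite lee_fin Fnorm_integrand_ge0.
- exact/measurable_EFinP/measurable_Fnorm_integrand.
Qed.

End Fnorm.

Theorem corollary6p1 (R : realType) (d : nat)
  (d1 : measure_display) (T1 : measurableType d1) (P1 : probability T1 R)
  (X : 'I_d -> T1 -> R)
  (d2 : measure_display) (T2 : measurableType d2) (P2 : probability T2 R)
  (Y : 'I_d -> T2 -> R) :
  Fnorm_generator P1 X -> Fnorm_generator P2 Y ->
  ((forall x : 'rV[R]_d.+1, Fnorm P1 X x = Fnorm P2 Y x) <->
   pos_unit_sphere (Fnorm P1 X) = pos_unit_sphere (Fnorm P2 Y)).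
Proof.
move=> genX genY; split => [eqXY | eqS x]; first by rewrite (funext eqXY).
have mX i : measurable_fun setT (X i) by case: (genX i).
have mY i : measurable_fun setT (Y i) by case: (genY i).
rewrite -Fnorm_normr -[RHS]Fnorm_normr.
apply: eq_on_pos_orthant_of_pos_unit_sphere eqS _.
- exact: Fnorm_pos_homogeneous.
- exact: Fnorm_pos_homogeneous.
- exact: Fnorm_ge0.
- exact: Fnorm_ge0.
- by move=> j; rewrite mxE.
Qed.
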